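(* Let $N\ge1$, $\frac{(N-2)_+}{N}<m<1$, $q=m+\frac2N$. There exists $A_{sub}>0$ depending only on $N$ and $m$ such that: (i) if $m\in[\frac{N-1}{N},1)$, then for every $A\ge A_{sub}$ the function $w_A(s,y):=\sigma_A(y)$ satisfies $\partial_s w_A-\mathcal{L}w_A\le0$ in $(0,\infty)\times\mathbb{R}^N$; (ii) if $m\in(\frac{(N-2)_+}{N},\frac{N-1}{N})$, then for every $A\ge A_{sub}$ the function $$w_A(s,y):=\sigma_A(y)\Big(1-\frac{\gamma}{s}\Big),\qquad \gamma:=\frac{1}{2(1-m)},$$ satisfies $\partial_s w_A-\mathcal{L}w_A\le0$ in $(s_0,\infty)\times\mathbb{R}^N$, where $s_0:=\max\{\frac{4q}{1-m},\frac{2^{m+2}q}{q-1}\}$.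
   Context: $\sigma_A(y):=(A+B_0|y|^2)^{1/(m-1)}$ for $A>0$, with $B_0:=\frac{1-m}{2m(mN-N+2)}$. The nonlinear operator $\mathcal{L}$ acts on positive functions $z(s,y)$ by $$\mathcal{L}z:=\Delta z^m+\frac{1}{N(q-1)}(Nz+y\cdot\nabla z)+\frac{1}{(q-1)s}\Big(z+\frac{1-m}{2}y\cdot\nabla z\Big)-\frac{z^q}{s},$$ with $q=m+2/N$. *)

From Stdlib Require Import Reals Lra ClassicalEpsilon.
Open Scope R_scope.

(* Points of R^N are represented as y : nat -> R; only coordinates 0..N-1 matter. *)
Fixpoint sumN (n : nat) (f : nat -> R) : R :=
  match n with O => 0 | S k => sumN k f + f k end.

Definition norm2 (N : nat) (y : nat -> R) : R := sumN N (fun i => y i ^ 2).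

(* The derivative of f : R -> R at x (chosen by epsilon; it is the true
   derivative whenever f is differentiable at x, which is the case here). *)
Definition Deriv (f : R -> R) (x : R) : R :=
  epsilon (inhabits 0) (fun l => derivable_pt_lim f x l).

Definition upd (y : nat -> R) (i : nat) (t : R) : nat -> R :=
  fun j => if Nat.eqb j i then t else y j.

Definition partial (i : nat) (f : (nat -> R) -> R) (y : nat -> R) : R :=
  Deriv (fun t => f (upd y i t)) (y i).

Definition laplacian (N : nat) (f : (nat -> R) -> R) (y : nat -> R) : R :=
  sumN N (fun i => partial i (partial i f) y).

Definition ygrad (N : nat) (f : (nat -> R) -> R) (y : nat -> R) : R :=
  sumN N (fun i => y i * partial i f y).

Definition qexp (N : nat) (m : R) : R := m + 2 / INR N.

Definition B0 (N : nat) (m : R) : R :=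
  (1 - m) / (2 * m * (m * INR N - INR N + 2)).

Definition sigmaA (N : nat) (m A : R) (y : nat -> R) : R :=
  Rpower (A + B0 N m * norm2 N y) (1 / (m - 1)).

Definition Lop (N : nat) (m : R) (z : R -> (nat -> R) -> R) (s : R) (y : nat -> R) : R :=
  let q := qexp N m in
  laplacian N (fun x => Rpower (z s x) m) y
  + 1 / (INR N * (q - 1)) * (INR N * z s y + ygrad N (z s) y)
  + 1 / ((q - 1) * s) * (z s y + (1 - m) / 2 * ygrad N (z s) y)
  - Rpower (z s y) q / s.

Definition parab (N : nat) (m : R) (w : R -> (nat -> R) -> R) (s : R) (y : nat -> R) : R :=
  Deriv (fun t => w t y) s - Lop N m w s y.

(* Both candidates are separable, w(s,y) = sigma_A(y) g(s).  With U = A + B0 |y|^2 and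
   W = U^(1/(m-1) - 1) one has sigma_A = A W + B0 |y|^2 W, and the value of B0 makes
   d_s w - L w split as A W P1(s) + B0 |y|^2 W P2(s), where P1 and P2 depend on y only
   through sigma_A^(q-1) = U^(-(q-1)/(1-m)).  For g = 1 the two terms recombine into
   (W/s) (U^(1-(q-1)/(1-m)) - A/(q-1)), which is nonpositive when m >= (N-1)/N and A is
   large.  For g = 1 - gamma/s, with x = gamma/s <= 1/(8q), the estimates
   (1-m)(1-x)x <= (1-x)^m - (1-x) <= 7/6 (1-m) x and U^(-(q-1)/(1-m)) <= 1/(6q) (for
   A >= (6q)^((1-m)/(q-1))) make both P1 and P2 nonpositive. *)

From Stdlib Require Import Reals Lra Lia ClassicalEpsilon FunctionalExtensionality.
Open Scope R_scope.

Lemma Deriv_eq f x l : derivable_pt_lim f x l -> Deriv f x = l.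
Proof.
  intros Hl; unfold Deriv.
  apply (uniqueness_limite f x); [|exact Hl].
  apply (epsilon_spec (inhabits 0) (fun l => derivable_pt_lim f x l)).
  now exists l.
Qed.

Lemma sumN_ext n f g : (forall i, (i < n)%nat -> f i = g i) -> sumN n f = sumN n g.
Proof.
  induction n as [|n IH]; intros Hfg; cbn [sumN]; [reflexivity|].
  rewrite IH, Hfg; [reflexivity|lia|intros; apply Hfg; lia].
Qed.

Lemma sumN_affine n a b f : sumN n (fun i => a + b * f i) = INR n * a + b * sumN n f.
Proof.
  induction n as [|n IH]; cbn [sumN]; [simpl; ring|].
  rewrite IH, S_INR; ring.
Qed.

Lemma norm2_nonneg N y : 0 <= norm2 N y.
Proof.
  unfold norm2; induction N as [|N IH]; cbn [sumN]; [lra|].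
  pose proof (pow2_ge_0 (y N)); lra.
Qed.

Lemma upd_same y i t : upd y i t i = t.
Proof. unfold upd; now rewrite Nat.eqb_refl. Qed.

Lemma norm2_upd N y i t : (i < N)%nat ->
  norm2 N (upd y i t) = (norm2 N y - y i ^ 2) + t ^ 2.
Proof.
  unfold norm2; induction N as [|N IH]; intros Hi; [lia|]; cbn [sumN].
  destruct (Nat.eq_dec i N) as [->|HiN].
  - rewrite (sumN_ext N (fun j => upd y N t j ^ 2) (fun j => y j ^ 2)).
    + rewrite upd_same; ring.
    + intros j Hj; unfold upd; destruct (Nat.eqb_spec j N); [lia|reflexivity].
  - rewrite IH by lia; unfold upd.
    destruct (Nat.eqb_spec N i); [lia|ring].
Qed.

Lemma norm2_drop_nonneg N y i : (i < N)%nat -> 0 <= norm2 N y - y i ^ 2.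
Proof.
  intros Hi; pose proof (norm2_upd N y i 0 Hi); pose proof (norm2_nonneg N (upd y i 0)).
  lra.
Qed.

Lemma derivable_pt_lim_radial_slice (psi psi' : R -> R) c t :
  0 <= c -> (forall r, 0 <= r -> derivable_pt_lim psi r (psi' r)) ->
  derivable_pt_lim (fun u => psi (c + u ^ 2)) t (2 * t * psi' (c + t ^ 2)).
Proof.
  intros Hc Hpsi.
  replace (2 * t * psi' (c + t ^ 2)) with (psi' (c + t ^ 2) * (0 + INR 2 * t ^ (2 - 1)))
    by (simpl; ring).
  apply (derivable_pt_lim_comp (fun u => c + u ^ 2) psi).
  - apply derivable_pt_lim_plus; [apply derivable_pt_lim_const|apply derivable_pt_lim_pow].
  - apply Hpsi; pose proof (pow2_ge_0 t); lra.
Qed.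

Section RadialCalculus.
Variables (N : nat) (phi phi' phi'' : R -> R).
Hypothesis phi_deriv : forall r, 0 <= r -> derivable_pt_lim phi r (phi' r).

Lemma partial_radial y i : (i < N)%nat ->
  partial i (fun x => phi (norm2 N x)) y = 2 * y i * phi' (norm2 N y).
Proof.
  intros Hi; unfold partial.
  replace (fun t => phi (norm2 N (upd y i t)))
    with (fun t => phi ((norm2 N y - y i ^ 2) + t ^ 2))
    by (apply functional_extensionality; intros t; now rewrite norm2_upd).
  rewrite (Deriv_eq _ _ _ (derivable_pt_lim_radial_slice phi phi' _ (y i)
             (norm2_drop_nonneg N y i Hi) phi_deriv)).
  f_equal; f_equal; ring.
Qed.

Lemma ygrad_radial y :
  ygrad N (fun x => phi (norm2 N x)) y = 2 * norm2 N y * phi' (norm2 N y).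
Proof.
  unfold ygrad.
  rewrite (sumN_ext N _ (fun i => 0 + 2 * phi' (norm2 N y) * y i ^ 2)).
  - rewrite sumN_affine; unfold norm2; ring.
  - intros i Hi; rewrite partial_radial by exact Hi; ring.
Qed.

Hypothesis phi'_deriv : forall r, 0 <= r -> derivable_pt_lim phi' r (phi'' r).

Lemma laplacian_radial y :
  laplacian N (fun x => phi (norm2 N x)) y
  = 2 * INR N * phi' (norm2 N y) + 4 * norm2 N y * phi'' (norm2 N y).
Proof.
  unfold laplacian.
  rewrite (sumN_ext N _ (fun i => 2 * phi' (norm2 N y) + 4 * phi'' (norm2 N y) * y i ^ 2)).
  { rewrite sumN_affine; unfold norm2; ring. }
  intros i Hi; unfold partial at 1.
  set (c := norm2 N y - y i ^ 2).
  replace (fun t => partial i (fun x => phi (norm2 N x)) (upd y i t))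
    with (fun t => 2 * t * phi' (c + t ^ 2)).
  2:{ apply functional_extensionality; intros t.
      rewrite partial_radial, norm2_upd, upd_same by exact Hi; reflexivity. }
  apply Deriv_eq.
  replace (norm2 N y) with (c + y i ^ 2) by (unfold c; ring).
  replace (2 * phi' (c + y i ^ 2) + 4 * phi'' (c + y i ^ 2) * y i ^ 2)
    with (2 * phi' (c + y i ^ 2) + 2 * y i * (2 * y i * phi'' (c + y i ^ 2))) by ring.
  apply (derivable_pt_lim_mult (fun t => 2 * t) (fun t => phi' (c + t ^ 2))).
  - pose proof (derivable_pt_lim_scal id 2 (y i) 1 (derivable_pt_lim_id _)) as Hlin.
    rewrite Rmult_1_r in Hlin; exact Hlin.
  - exact (derivable_pt_lim_radial_slice phi' phi'' c (y i)
             (norm2_drop_nonneg N y i Hi) phi'_deriv).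
Qed.

End RadialCalculus.

Lemma Rpower_pos x a : 0 < Rpower x a.
Proof. apply exp_pos. Qed.

Lemma Rpower_1_base a : Rpower 1 a = 1.
Proof. unfold Rpower; rewrite ln_1, Rmult_0_r; apply exp_0. Qed.

Lemma Rpower_pred x a : 0 < x -> Rpower x a = x * Rpower x (a - 1).
Proof.
  intros Hx; rewrite <- (Rpower_1 x) at 2 by exact Hx.
  rewrite <- Rpower_plus; f_equal; ring.
Qed.

Lemma derivable_pt_lim_Rpower_affine K A B a r : 0 < A + B * r ->
  derivable_pt_lim (fun r => K * Rpower (A + B * r) a) r
    (K * a * B * Rpower (A + B * r) (a - 1)).
Proof.
  intros Hpos.
  replace (K * a * B * Rpower (A + B * r) (a - 1))
    with (K * (a * Rpower (A + B * r) (a - 1) * (0 + B * 1))) by ring.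
  apply derivable_pt_lim_scal.
  apply (derivable_pt_lim_comp (fun r => A + B * r) (fun u => Rpower u a)).
  - apply derivable_pt_lim_plus; [apply derivable_pt_lim_const|].
    apply derivable_pt_lim_scal, derivable_pt_lim_id.
  - exact (derivable_pt_lim_power _ a Hpos).
Qed.

Section PowerProfile.
Variables (N : nat) (K A B a : R).
Hypotheses (HA : 0 < A) (HB : 0 <= B).

Let profile_base_pos r : 0 <= r -> 0 < A + B * r.
Proof. intros Hr; nra. Qed.

Lemma ygrad_power_profile y :
  ygrad N (fun x => K * Rpower (A + B * norm2 N x) a) y
  = 2 * norm2 N y * (K * a * B * Rpower (A + B * norm2 N y) (a - 1)).
Proof.
  apply (ygrad_radial N (fun r => K * Rpower (A + B * r) a)
           (fun r => K * a * B * Rpower (A + B * r) (a - 1))).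
  intros r Hr; exact (derivable_pt_lim_Rpower_affine K A B a r (profile_base_pos r Hr)).
Qed.

Lemma laplacian_power_profile y :
  laplacian N (fun x => K * Rpower (A + B * norm2 N x) a) y
  = 2 * INR N * (K * a * B * Rpower (A + B * norm2 N y) (a - 1))
    + 4 * norm2 N y * (K * a * B * (a - 1) * B * Rpower (A + B * norm2 N y) (a - 1 - 1)).
Proof.
  apply (laplacian_radial N (fun r => K * Rpower (A + B * r) a)
           (fun r => K * a * B * Rpower (A + B * r) (a - 1))
           (fun r => K * a * B * (a - 1) * B * Rpower (A + B * r) (a - 1 - 1))).
  - intros r Hr; exact (derivable_pt_lim_Rpower_affine K A B a r (profile_base_pos r Hr)).
  - intros r Hr.
    exact (derivable_pt_lim_Rpower_affine (K * a * B) A B (a - 1) r (profile_base_pos r Hr)).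
Qed.

End PowerProfile.

Lemma selfsimilar_coeffs_nonpos m q x G S P :
  0 < m -> m < 1 -> 1 < q -> 0 < x -> x <= 1 / (8 * q) ->
  (1 - m) * (1 - x) * x <= G - (1 - x) <= 7 / 6 * (1 - m) * x ->
  0 <= S <= 1 / (6 * q) -> 0 <= P <= 1 ->
  let i := 2 * (1 - m) * x in
  x * i + (G - (1 - x)) / (q - 1) - (1 - x) * i / (q - 1) + S * P * i <= 0
  /\ x * i - (G - (1 - x)) / (1 - m) + S * P * i <= 0.
Proof.
  intros Hm0 Hm1 Hq Hx0 Hx1 [HG0 HG1] [HS0 HS1] [HP0 HP1] i.
  assert (Hi : 0 < i) by (unfold i; nra).
  set (iq := / q) in *.
  assert (Hiq : 0 < iq) by (apply Rinv_0_lt_compat; lra).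
  assert (Hiq1 : iq < 1) by (rewrite <- Rinv_1; apply Rinv_lt_contravar; lra).
  replace (1 / (8 * q)) with (iq / 8) in Hx1 by (unfold iq; field; lra).
  replace (1 / (6 * q)) with (iq / 6) in HS1 by (unfold iq; field; lra).
  assert (HSP : S * P <= iq / 6) by nra.
  assert (HSPi : S * P * i <= iq / 6 * i) by (apply Rmult_le_compat_r; lra).
  assert (Hxi : x * i <= iq / 8 * i) by (apply Rmult_le_compat_r; lra).
  unfold Rdiv.
  split.
  - set (j := / (q - 1)).
    assert (Hj : 0 < j) by (apply Rinv_0_lt_compat; lra).
    assert (Hiqj : iq * i <= j * i)
      by (apply Rmult_le_compat_r; [lra|apply Rinv_le_contravar; lra]).
    assert ((G - (1 - x)) * j <= 7 / 12 * i * j)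
      by (apply Rmult_le_compat_r; unfold i; lra).
    assert (7 / 8 * (i * j) <= (1 - x) * (i * j))
      by (apply Rmult_le_compat_r; [apply Rmult_le_pos|]; lra).
    nra.
  - assert (x * (7 / 8) <= (G - (1 - x)) * / (1 - m)).
    { apply (Rmult_le_reg_r (1 - m)); [lra|].
      replace ((G - (1 - x)) * / (1 - m) * (1 - m)) with (G - (1 - x)) by (field; lra).
      nra. }
    assert (i <= 2 * x) by (unfold i; nra).
    nra.
Qed.

Lemma exp_sub_1_le u : 0 <= u < 1 -> exp u - 1 <= u / (1 - u).
Proof.
  intros Hu.
  pose proof (exp_ineq1_le (- u)) as Hneg.
  assert (Hprod : exp u * exp (- u) = 1)
    by (rewrite <- exp_plus, Rplus_opp_r; apply exp_0).
  replace (u / (1 - u)) with (1 / (1 - u) - 1) by (field; lra).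
  enough (exp u <= 1 / (1 - u)) by lra.
  apply (Rmult_le_reg_r (1 - u)); [lra|].
  replace (1 / (1 - u) * (1 - u)) with 1 by (field; lra).
  pose proof (exp_pos u); nra.
Qed.

Lemma Rpower_one_sub_bounds m x : 0 < m -> m < 1 -> 0 < x -> x <= 1 / 8 ->
  (1 - m) * (1 - x) * x <= Rpower (1 - x) m - (1 - x) <= 7 / 6 * (1 - m) * x.
Proof.
  intros Hm0 Hm1 Hx0 Hx1.
  set (p := 1 - x).
  set (u := - (1 - m) * ln p).
  assert (Hln_lo : x <= - ln p).
  { pose proof (exp_ineq1_le (ln p)); rewrite exp_ln in * by (unfold p; lra).
    unfold p in *; lra. }
  assert (Hln_hi : - ln p <= x / p).
  { pose proof (exp_ineq1_le (ln (/ p))).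
    rewrite exp_ln, ln_Rinv in * by (try apply Rinv_0_lt_compat; unfold p; lra).
    replace (x / p) with (/ p - 1) by (unfold p; field; lra); lra. }
  assert (Hpow : Rpower p m = p * exp u).
  { unfold Rpower, u; rewrite <- (exp_ln p) at 2 by (unfold p; lra).
    rewrite <- exp_plus; f_equal; ring. }
  assert (Hu_lo : (1 - m) * x <= u) by (unfold u; nra).
  assert (Hu_hi : p * u <= (1 - m) * x).
  { replace ((1 - m) * x) with (p * ((1 - m) * (x / p))) by (unfold p; field; lra).
    apply Rmult_le_compat_l; unfold u, p in *; nra. }
  assert (Hu_small : u <= 1 / 7).
  { assert (x / p <= 1 / 7).
    { apply (Rmult_le_reg_r p); [unfold p; lra|].
      replace (x / p * p) with x by (unfold p; field; lra); unfold p; lra. }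
    unfold u; nra. }
  assert (Hu_pos : 0 <= u) by nra.
  rewrite Hpow; fold p.
  split.
  - pose proof (exp_ineq1_le u).
    assert (0 <= p * (exp u - 1 - u)) by (apply Rmult_le_pos; unfold p; lra).
    assert (0 <= p * (u - (1 - m) * x)) by (apply Rmult_le_pos; unfold p; lra).
    lra.
  - assert (exp u - 1 <= 7 / 6 * u).
    { eapply Rle_trans; [apply exp_sub_1_le; lra|].
      apply (Rmult_le_reg_r (1 - u)); [lra|].
      replace (u / (1 - u) * (1 - u)) with u by (field; lra); nra. }
    assert (0 <= p * (7 / 6 * u - (exp u - 1))) by (apply Rmult_le_pos; unfold p; lra).
    lra.
Qed.

Lemma derivable_pt_lim_one_sub_inv c s : s <> 0 ->
  derivable_pt_lim (fun t => 1 - c / t) s (c / s ^ 2).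
Proof.
  intros Hs.
  replace (c / s ^ 2) with (0 - (0 * id s - 1 * fct_cte c s) / Rsqr (id s))
    by (unfold fct_cte, id, Rsqr; field; exact Hs).
  apply (derivable_pt_lim_minus (fct_cte 1) (fct_cte c / id)%F).
  - apply derivable_pt_lim_const.
  - apply derivable_pt_lim_div; [apply derivable_pt_lim_const|apply derivable_pt_lim_id|exact Hs].
Qed.

Section Subsolutions.
Variables (N : nat) (m : R).
Hypotheses (HN : (1 <= N)%nat) (Hm0 : 0 < m) (Hm1 : m < 1)
  (Hk : 0 < m * INR N - INR N + 2).

Let HNpos : 0 < INR N.
Proof. apply lt_0_INR; lia. Qed.

Lemma qexp_gt_1 : 1 < qexp N m.
Proof.
  unfold qexp.
  assert (2 / INR N = (m * INR N - INR N + 2) / INR N + (1 - m)) by (field; lra).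
  assert (0 < (m * INR N - INR N + 2) / INR N) by (apply Rdiv_lt_0_compat; lra).
  lra.
Qed.

Lemma B0_pos : 0 < B0 N m.
Proof. unfold B0; apply Rdiv_lt_0_compat; nra. Qed.

Lemma parab_separable A (g : R -> R) g' s y :
  0 < A -> 0 < g s -> s <> 0 -> derivable_pt_lim g s g' ->
  let q := qexp N m in
  let U := A + B0 N m * norm2 N y in
  let W := Rpower U (1 / (m - 1) - 1) in
  let S := Rpower U ((q - 1) / (m - 1)) in
  parab N m (fun t x => sigmaA N m A x * g t) s y
  = A * W * (g' + (Rpower (g s) m - g s) / (q - 1) - g s / ((q - 1) * s)
             + S * Rpower (g s) q / s)
    + B0 N m * norm2 N y * W * (g' - (Rpower (g s) m - g s) / (1 - m)
             + S * Rpower (g s) q / s).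
Proof.
  intros HA Hg Hs Hg' q U W S.
  set (e := 1 / (m - 1)).
  pose proof B0_pos as HB.
  assert (Hbase : forall x, 0 < A + B0 N m * norm2 N x)
    by (intros x; pose proof (norm2_nonneg N x); nra).
  unfold parab, Lop; fold q.
  rewrite (Deriv_eq _ s (sigmaA N m A y * g')) by now apply derivable_pt_lim_scal.
  replace (fun x => Rpower (sigmaA N m A x * g s) m)
    with (fun x => Rpower (g s) m * Rpower (A + B0 N m * norm2 N x) (e + 1)).
  2:{ apply functional_extensionality; intros x; unfold sigmaA; fold e.
      rewrite <- Rpower_mult_distr, Rpower_mult by (auto; apply Rpower_pos).
      replace (e * m) with (e + 1) by (unfold e; field; lra); ring. }
  replace (fun x => sigmaA N m A x * g s)
    with (fun x => g s * Rpower (A + B0 N m * norm2 N x) e)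
    by (apply functional_extensionality; intros x; unfold sigmaA; fold e; ring).
  rewrite laplacian_power_profile, ygrad_power_profile by lra.
  unfold sigmaA; fold e U.
  replace (e + 1 - 1) with e by ring; replace (e + 1 - 1 - 1) with (e - 1) by ring.
  fold W.
  assert (HUe : Rpower U e = U * W) by (apply Rpower_pred; apply Hbase).
  assert (HUq : Rpower (Rpower U e * g s) q = U * W * S * Rpower (g s) q).
  { rewrite <- Rpower_mult_distr, Rpower_mult by (auto; apply Rpower_pos).
    replace (e * q) with (e + (q - 1) / (m - 1)) by (unfold e; field; lra).
    rewrite Rpower_plus, HUe; fold S; ring. }
  rewrite HUq, HUe.
  change (Rpower U (e - 1)) with W.
  (* The identity rests on (1 + 1/(m-1)) B0 = -1 / (2 N (q-1)) and (1-m)/(m-1) = -1. *)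
  clearbody W S; unfold U, q, e, B0, qexp; field; repeat split; lra.
Qed.

Lemma parab_stationary_nonpos A s y :
  (INR N - 1) / INR N <= m -> 1 <= A -> qexp N m - 1 <= A -> 0 < s ->
  parab N m (fun _ x => sigmaA N m A x) s y <= 0.
Proof.
  intros Hm HA1 HAq Hs.
  pose proof qexp_gt_1 as Hq.
  replace (fun (_ : R) x => sigmaA N m A x)
    with (fun (t : R) x => sigmaA N m A x * (fun _ => 1) t)
    by (do 2 (apply functional_extensionality; intros); ring).
  rewrite (parab_separable A _ 0) by (lra || apply derivable_pt_lim_const).
  cbv zeta; rewrite !Rpower_1_base.
  set (q := qexp N m) in *.
  set (U := A + B0 N m * norm2 N y).
  set (W := Rpower U (1 / (m - 1) - 1)).
  set (S := Rpower U ((q - 1) / (m - 1))).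
  assert (HU : 1 <= U)
    by (pose proof B0_pos; pose proof (norm2_nonneg N y); unfold U; nra).
  (* [U S <= 1] is where [m >= (N - 1) / N] enters: it makes the exponent of [U S] nonpositive. *)
  assert (HUS : U * S <= 1).
  { unfold S; rewrite <- (Rpower_1 U) at 1 by lra; rewrite <- Rpower_plus.
    apply (Rle_trans _ (Rpower U 0)); [|rewrite Rpower_O; lra].
    apply Rle_Rpower; [lra|].
    apply (Rmult_le_reg_r (1 - m)); [lra|].
    replace ((1 + (q - 1) / (m - 1)) * (1 - m)) with (1 - m - (q - 1)) by (field; lra).
    replace ((INR N - 1) / INR N) with (1 - 1 / INR N) in Hm by (field; lra).
    unfold q, qexp; lra. }
  assert (HAq' : 1 <= A / (q - 1)).
  { apply (Rmult_le_reg_r (q - 1)); [lra|].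
    replace (A / (q - 1) * (q - 1)) with A by (field; lra); lra. }
  replace (A * W * (0 + (1 - 1) / (q - 1) - 1 / ((q - 1) * s) + S * 1 / s)
           + B0 N m * norm2 N y * W * (0 - (1 - 1) / (1 - m) + S * 1 / s))
    with (W / s * (U * S - A / (q - 1))) by (unfold U; field; lra).
  assert (0 < W / s) by (apply Rdiv_lt_0_compat; [apply Rpower_pos|lra]).
  nra.
Qed.

Lemma parab_selfsimilar_nonpos A s y :
  let gamma := 1 / (2 * (1 - m)) in
  let q := qexp N m in
  Rpower (6 * q) ((1 - m) / (q - 1)) <= A -> 4 * q / (1 - m) < s ->
  parab N m (fun t x => sigmaA N m A x * (1 - gamma / t)) s y <= 0.
Proof.
  intros gamma q HA Hs.
  pose proof qexp_gt_1 as Hq; fold q in Hq.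
  assert (HA0 : 0 < A) by (eapply Rlt_le_trans; [apply Rpower_pos|exact HA]).
  assert (Hs0 : 0 < s)
    by (assert (0 < 4 * q / (1 - m)) by (apply Rdiv_lt_0_compat; lra); lra).
  set (x := gamma / s).
  assert (Hx0 : 0 < x)
    by (apply Rdiv_lt_0_compat; [unfold gamma; apply Rdiv_lt_0_compat|]; lra).
  assert (Hx1 : x <= 1 / (8 * q)).
  { apply (Rmult_le_reg_r (8 * q * s)); [nra|].
    replace (x * (8 * q * s)) with (4 * q / (1 - m)) by (unfold x, gamma; field; lra).
    replace (1 / (8 * q) * (8 * q * s)) with s by (field; lra); lra. }
  assert (Hx8 : x <= 1 / 8).
  { enough (1 / (8 * q) <= 1 / 8) by lra.
    unfold Rdiv; rewrite !Rmult_1_l; apply Rinv_le_contravar; lra. }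
  rewrite (parab_separable A _ (gamma / s ^ 2))
    by (try apply derivable_pt_lim_one_sub_inv; fold x; lra).
  cbv zeta; fold q x.
  set (U := A + B0 N m * norm2 N y).
  set (W := Rpower U (1 / (m - 1) - 1)).
  set (S := Rpower U ((q - 1) / (m - 1))).
  assert (HU : A <= U)
    by (pose proof B0_pos; pose proof (norm2_nonneg N y); unfold U; nra).
  (* [A] is chosen so that [U ^ (-(q-1)/(1-m))] is at most [1 / (6 q)]. *)
  assert (HS : S <= 1 / (6 * q)).
  { unfold S; replace ((q - 1) / (m - 1)) with (- ((q - 1) / (1 - m))) by (field; lra).
    rewrite Rpower_Ropp.
    replace (1 / (6 * q))
      with (/ Rpower (Rpower (6 * q) ((1 - m) / (q - 1))) ((q - 1) / (1 - m))).
    2:{ rewrite Rpower_mult.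
        replace ((1 - m) / (q - 1) * ((q - 1) / (1 - m))) with 1 by (field; lra).
        rewrite Rpower_1 by lra; field; lra. }
    apply Rinv_le_contravar; [apply Rpower_pos|].
    apply Rle_Rpower_l; [left; apply Rdiv_lt_0_compat; lra|split; [apply Rpower_pos|lra]]. }
  assert (HP : Rpower (1 - x) q <= 1).
  { apply (Rle_trans _ (Rpower 1 q)); [apply Rle_Rpower_l; lra|now rewrite Rpower_1_base]. }
  destruct (selfsimilar_coeffs_nonpos m q x (Rpower (1 - x) m) S (Rpower (1 - x) q)
              Hm0 Hm1 Hq Hx0 Hx1)
    as [Hcoef1 Hcoef2].
  - apply Rpower_one_sub_bounds; lra.
  - split; [left; apply Rpower_pos|exact HS].
  - split; [left; apply Rpower_pos|exact HP].
  - set (i := 2 * (1 - m) * x) in Hcoef1, Hcoef2.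
    assert (Hinv : / s = i) by (unfold i, x, gamma; field; lra).
    replace (gamma / s ^ 2) with (x * i) by (rewrite <- Hinv; unfold x; field; lra).
    replace ((1 - x) / ((q - 1) * s)) with ((1 - x) * i / (q - 1))
      by (rewrite <- Hinv; field; lra).
    replace (S * Rpower (1 - x) q / s) with (S * Rpower (1 - x) q * i)
      by (rewrite <- Hinv; field; lra).
    assert (0 <= A * W) by (apply Rmult_le_pos; [lra|left; apply Rpower_pos]).
    assert (0 <= B0 N m * norm2 N y * W).
    { pose proof B0_pos; pose proof (norm2_nonneg N y).
      apply Rmult_le_pos; [apply Rmult_le_pos|left; apply Rpower_pos]; lra. }
    nra.
Qed.

End Subsolutions.

Theorem lemma3p1 :
  forall (N : nat) (m : R),
    (1 <= N)%nat ->
    Rmax (INR N - 2) 0 / INR N < m -> m < 1 ->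
    exists Asub : R, 0 < Asub /\
      ((INR N - 1) / INR N <= m ->
        forall A : R, Asub <= A ->
        forall (s : R) (y : nat -> R), 0 < s ->
          parab N m (fun _ x => sigmaA N m A x) s y <= 0)
      /\
      (m < (INR N - 1) / INR N ->
        forall A : R, Asub <= A ->
        let gamma := 1 / (2 * (1 - m)) in
        let q := qexp N m in
        let s0 := Rmax (4 * q / (1 - m)) (Rpower 2 (m + 2) * q / (q - 1)) in
        forall (s : R) (y : nat -> R), s0 < s ->
          parab N m (fun t x => sigmaA N m A x * (1 - gamma / t)) s y <= 0).
Proof.
  intros N m HN Hmax Hm1.
  assert (HNpos : 0 < INR N) by (apply lt_0_INR; lia).
  assert (HmN : Rmax (INR N - 2) 0 < m * INR N).
  { apply (Rmult_lt_reg_r (/ INR N)); [apply Rinv_0_lt_compat; lra|].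
    rewrite Rmult_assoc, Rinv_r, Rmult_1_r by lra; exact Hmax. }
  pose proof (Rmax_l (INR N - 2) 0); pose proof (Rmax_r (INR N - 2) 0).
  assert (Hk : 0 < m * INR N - INR N + 2) by lra.
  assert (Hm0 : 0 < m) by nra.
  pose proof (qexp_gt_1 N m HN Hk) as Hq.
  set (q := qexp N m) in *.
  set (R0 := Rpower (6 * q) ((1 - m) / (q - 1))).
  assert (HR0 : 0 < R0) by apply Rpower_pos.
  exists (R0 + q); repeat split; [lra| |].
  - intros Hm A HA s y Hs.
    apply parab_stationary_nonpos; auto; fold q; lra.
  - intros Hm A HA; cbv zeta; fold q; intros s y Hs.
    apply parab_selfsimilar_nonpos; auto; fold q; [fold R0; lra|].
    (* Only the first term of [s0] is needed. *)
    pose proof (Rmax_l (4 * q / (1 - m)) (Rpower 2 (m + 2) * q / (q - 1))); lra.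
Qed.
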